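(* Let $G$ be a connected graph with $\mu_t(G)=|\mathcal{S}(G)|$, and let $\{C_1,\dots,C_k\}$ be the partition of $\mathcal{S}(G)$ into true twin equivalence classes. Then for every integer $n\ge 2$, $$\mu_t(G\,\Box\,K_n)=\sum_{i=1}^{k}\max\{|C_i|,n\}.$$
   Context: All graphs are finite, simple and undirected; $K_n$ is the complete graph on $n$ vertices and $N_G[v]$ the closed neighborhood of $v$. The Cartesian product $G\,\Box\,H$ has vertex set $V(G)\times V(H)$, with $(x,y)$ adjacent to $(x',y')$ iff either $x=x'$ and $yy'\in E(H)$, or $xx'\in E(G)$ and $y=y'$. Let $F$ be a connected graph and $X\subseteq V(F)$. Two vertices $u,v\in V(F)$ are $X$-visible if there exists a shortest $u,v$-path in $F$ none of whose internal vertices belongs to $X$. $X$ is a total mutual-visibility set of $F$ if every two vertices of $F$ are $X$-visible (the empty set is allowed). $\mu_t(F)$ is the maximum cardinality of a total mutual-visibility set of $F$. A vertex is simplicial if its neighbors induce a complete graph; $\mathcal{S}(G)$ is the set of simplicial vertices of $G$. Two simplicial vertices $g,g'$ are in the same true twin class iff $N_G[g]=N_G[g']$. *)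

(* Finite simple graphs as a symmetric irreflexive rel on a finType. *)
From mathcomp Require Import all_boot.
Set Implicit Arguments. Unset Strict Implicit. Unset Printing Implicit Defensive.

Section Graphs.
Variable T : finType.
Variable e : rel T.

Definition connected_graph : Prop := forall u v : T, connect e u v.

(* A u,v-walk is a sequence p with u :: p an e-path ending in v; its length is size p. *)
Definition is_walk (u v : T) (p : seq T) : bool := path e u p && (last u p == v).

Definition is_shortest (u v : T) (p : seq T) : Prop :=
  is_walk u v p /\ forall q, is_walk u v q -> size p <= size q.

(* internal vertices of the walk u :: p (all but the two endpoints) *)
Definition internal (p : seq T) : seq T := take (size p).-1 p.

Definition X_visible (X : {set T}) (u v : T) : Prop :=
  exists p, is_shortest u v p /\ all (fun x => x \notin X) (internal p).

Definition total_mutual_visibility_set (X : {set T}) : Prop :=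
  forall u v : T, X_visible X u v.

Definition mu_t_is (m : nat) : Prop :=
  (exists X : {set T}, total_mutual_visibility_set X /\ #|X| = m) /\
  (forall X : {set T}, total_mutual_visibility_set X -> #|X| <= m).

Definition closed_nbhd (v : T) : {set T} := [set x | (x == v) || e v x].

Definition simplicial (v : T) : bool :=
  [forall x, forall y, (e v x && e v y && (x != y)) ==> e x y].

Definition simplicial_set : {set T} := [set v | simplicial v].

Definition twin_classes : {set {set T}} :=
  [set [set g' in simplicial_set | closed_nbhd g' == closed_nbhd g]
  | g in simplicial_set].

End Graphs.

Definition cart_Kn (T : finType) (e : rel T) (n : nat) : rel (T * 'I_n) :=
  fun a b => ((a.1 == b.1) && (a.2 != b.2)) || (e a.1 b.1 && (a.2 == b.2)).
Arguments cart_Kn {T} e n.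

From mathcomp Require Import all_boot zify.
Set Implicit Arguments. Unset Strict Implicit. Unset Printing Implicit Defensive.

(* Write H = G □ K_n, a vertex (g, i) lying in the i-th layer.  The proof
   characterises the extremal sets through two properties of X ⊆ V(H):
   (a) every vertex of X has a simplicial first coordinate, and
   (b) X is crossing-free: no (a, j), (b, i) ∈ X with ab ∈ E(G) and i ≠ j.
   Every total mutual-visibility set of H satisfies (b), and also (a) when
   mu_t(G) = |S(G)|: shortest paths between two vertices of one layer stay in
   that layer, so a layer of X together with S(G) is a total mutual-visibility
   set of G, hence lies in S(G).  Conversely, in a connected G every set with
   (a) and (b) is a total mutual-visibility set of H, because internal vertices
   of shortest paths of G are never simplicial.
   Adjacent simplicial vertices are true twins, so by (b) the part of X above
   a twin class C is a subset of C × [n] any two points of which share a row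
   or a column; it has at most max(|C|, n) points.  The bound is attained by
   taking, for each class, either C × {i0} or {c} × [n]. *)

Lemma internal_rcons (T : finType) (s : seq T) (x : T) : internal (rcons s x) = s.
Proof. by rewrite /internal size_rcons /= -cats1 take_size_cat. Qed.

Lemma internal_map (A B : finType) (f : A -> B) (s : seq A) :
  internal (map f s) = map f (internal s).
Proof. by rewrite /internal map_take size_map. Qed.

Lemma internal_split (T : finType) (q : seq T) (x : T) : x \in internal q ->
  exists s1 z r, q = s1 ++ x :: z :: r.
Proof.
case/lastP: q => [|q0 w] //; rewrite internal_rcons => /splitPr [s1 [|z r]].
  by exists s1, w, [::]; rewrite rcons_cat.
by exists s1, z, (rcons r w); rewrite rcons_cat.
Qed.

(* A set Y ⊆ C × B any two points of which share a row or a column lies in a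
   single row or a single column, so it has at most max(|C|, |B|) points. *)
Lemma card_row_or_column (A B : finType) (Y : {set A * B}) (C : {set A}) :
  {in Y, forall y, y.1 \in C} ->
  {in Y &, forall y y', (y.1 == y'.1) || (y.2 == y'.2)} ->
  #|Y| <= maxn #|C| #|B|.
Proof.
move=> YC Yline; have [->|[y0 y0Y]] := set_0Vmem Y; first by rewrite cards0.
case: (boolP [forall y in Y, y.1 == y0.1]) => [/forall_inP row|].
  rewrite -(@card_in_imset _ _ snd); last first.
    by move=> [a b] [c d] /row /= /eqP -> /row /= /eqP -> /= ->.
  by apply: leq_trans (max_card _) _; rewrite leq_maxr.
rewrite negb_forall_in => /exists_inP [y1 y1Y ny1].
have y12 : y1.2 == y0.2 by move: (Yline _ _ y1Y y0Y); rewrite (negbTE ny1).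
have column : {in Y, forall y, y.2 == y0.2}.
  move=> y yY; apply/negPn/negP=> ny.
  move: (Yline _ _ yY y0Y) (Yline _ _ yY y1Y).
  rewrite (negbTE ny) (eqP y12) (negbTE ny) !orbF => /eqP -> /eqP y01.
  by rewrite y01 eqxx in ny1.
rewrite -(@card_in_imset _ _ fst); last first.
  by move=> [a b] [c d] /column /= /eqP -> /column /= /eqP -> /= ->.
apply: leq_trans (subset_leq_card _) (leq_maxl _ _).
by apply/subsetP=> x /imsetP [y yY ->]; apply: YC.
Qed.

Section Graph.
Variables (T : finType) (e : rel T).
Hypothesis e_sym : symmetric e.
Local Notation S := (simplicial_set e).

Lemma exists_shortest (a b : T) : connect e a b -> exists q, is_shortest e a b q.
Proof.
move=> /connectP [p pp lp].
pose P m := [exists t : m.-tuple T, is_walk e a b t].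
have walk_p : P (size p).
  by apply/existsP; exists (in_tuple p); rewrite /is_walk pp -lp eqxx.
have [m /existsP [t wt] tmin] := ex_minnP (ex_intro P _ walk_p).
exists t; split => // q wq; rewrite size_tuple; apply: tmin.
by apply/existsP; exists (in_tuple q).
Qed.

(* A vertex x followed by z on a shortest walk is not simplicial: its
   predecessor y and z are distinct and non-adjacent, else the walk could be
   shortened by skipping x. *)
Lemma shortest_not_simplicial a b s1 x z r :
  is_shortest e a b (s1 ++ x :: z :: r) -> ~~ simplicial e x.
Proof.
case=> /andP[]; rewrite cat_path last_cat /= => /and4P[p1 eyx exz pr] /eqP lb qmin.
apply/negP=> /forallP /(_ (last a s1)) /forallP /(_ z).
rewrite (e_sym x (last a s1)) eyx exz /=.
have [yz|nyz] := eqVneq (last a s1) z => /= [_|eyz].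
- have := qmin (s1 ++ r); rewrite /is_walk cat_path last_cat yz pr lb p1 eqxx.
  by rewrite !size_cat /= => /(_ isT); lia.
- have := qmin (s1 ++ z :: r); rewrite /is_walk cat_path last_cat /= eyz pr lb p1 eqxx.
  by rewrite !size_cat /= => /(_ isT); lia.
Qed.

Lemma shortest_internal_not_simplicial a b q : is_shortest e a b q ->
  all (fun x => ~~ simplicial e x) (internal q).
Proof.
move=> qs; apply/allP=> x /internal_split [s1 [z [r qE]]].
by rewrite qE in qs; exact: shortest_not_simplicial qs.
Qed.

Lemma simplicial_adj_twins a b : simplicial e a -> simplicial e b -> e a b ->
  closed_nbhd e a = closed_nbhd e b.
Proof.
have sub a' b' : simplicial e a' -> e a' b' ->
    closed_nbhd e a' \subset closed_nbhd e b'.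
  move=> sa eab; apply/subsetP=> x; rewrite !inE.
  case/orP=> [/eqP->|eax]; first by rewrite e_sym eab orbT.
  have [->|nxb] := eqVneq x b'; first by [].
  move/forallP: sa => /(_ x) /forallP /(_ b'); rewrite eax eab nxb /= => exb.
  by rewrite e_sym exb.
by move=> sa sb eab; apply/eqP; rewrite eqEsubset !sub // e_sym.
Qed.

Definition twin_class (g : T) : {set T} :=
  [set g' in S | closed_nbhd e g' == closed_nbhd e g].

Lemma twin_class_self g : g \in S -> g \in twin_class g.
Proof. by move=> gS; rewrite inE gS eqxx. Qed.

Lemma twin_class_simplicial g h : h \in twin_class g -> h \in S.
Proof. by rewrite inE => /andP[]. Qed.

Lemma twin_class_mem g h : h \in twin_class g -> twin_class h = twin_class g.
Proof. by rewrite inE => /andP[_ /eqP hN]; apply/setP=> x; rewrite !inE hN. Qed.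

Lemma twin_class_adj g y z : y \in twin_class g -> z \in twin_class g ->
  y != z -> e y z.
Proof.
rewrite !inE => /andP[_ /eqP Ny] /andP[_ /eqP Nz] nyz.
have : z \in closed_nbhd e z by rewrite inE eqxx.
by rewrite Nz -Ny inE eq_sym (negbTE nyz).
Qed.

Lemma twin_class_adj_eq a b : simplicial e a -> simplicial e b -> e a b ->
  twin_class a = twin_class b.
Proof.
by move=> sa sb eab; apply/setP=> x; rewrite !inE (simplicial_adj_twins sa sb eab).
Qed.

Lemma card_by_twin_class n (X : {set T * 'I_n}) : {in X, forall x, x.1 \in S} ->
  #|X| = \sum_(C in twin_classes e) #|[set x in X | twin_class x.1 == C]|.
Proof.
move=> XS; rewrite -sum1_card.
rewrite (partition_big (fun x => twin_class x.1) (mem (twin_classes e))).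
  by apply: eq_bigr => C _; rewrite -sum1_card; apply: eq_bigl => x; rewrite !inE.
by move=> x xX; apply/imsetP; exists x.1 => //; apply: XS.
Qed.

Definition twin_rep (g : T) : T := odflt g [pick y in twin_class g].

Lemma twin_rep_in g : g \in S -> twin_rep g \in twin_class g.
Proof.
by move=> gS; rewrite /twin_rep; case: pickP => [y //|/(_ g)]; rewrite twin_class_self.
Qed.

Lemma twin_rep_eq g h : g \in S -> twin_class g = twin_class h ->
  twin_rep g = twin_rep h.
Proof.
move=> gS E; rewrite /twin_rep -E.
by case: pickP => [y //|/(_ g)]; rewrite twin_class_self.
Qed.

End Graph.

Section CartesianProduct.
Variables (T : finType) (e : rel T) (n : nat).
Hypothesis e_sym : symmetric e.
Local Notation H := (cart_Kn e n).
Local Notation S := (simplicial_set e).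

Definition in_layer (i : 'I_n) (q : seq T) : seq (T * 'I_n) :=
  map (fun g => (g, i)) q.

Lemma in_layer_path a i q : path e a q -> path H (a, i) (in_layer i q).
Proof.
elim: q a => //= x q IH a /andP[eax pq].
by rewrite IH // andbT /cart_Kn /= eax eqxx orbT.
Qed.

Lemma last_in_layer a i q : last (a, i) (in_layer i q) = (last a q, i).
Proof. by rewrite /in_layer (last_map (fun g => (g, i))). Qed.

Lemma in_layer_walk a b i q :
  is_walk e a b q -> is_walk H (a, i) (b, i) (in_layer i q).
Proof.
by case/andP=> pq /eqP lq; rewrite /is_walk in_layer_path // last_in_layer lq eqxx.
Qed.

(* A lower bound on the number of K_n-edges of a walk x :: p ending at l:
   one if l is in another layer than x, two if the walk leaves the layer of l
   and comes back, zero otherwise. *)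
Definition layer_steps (x l : T * 'I_n) (p : seq (T * 'I_n)) : nat :=
  if x.2 != l.2 then 1 else if all (fun y => y.2 == l.2) p then 0 else 2.

(* Projecting a walk of H to G loses at least its K_n-edges. *)
Lemma project_walk p x : path H x p -> exists q,
  [/\ path e x.1 q, last x.1 q = (last x p).1
    & size q + layer_steps x (last x p) p <= size p].
Proof.
elim: p x => [|y p IH] x /=; first by move=> _; exists [::]; rewrite /layer_steps eqxx.
case/andP=> hxy /IH [q [pq lq sq]].
move: hxy; rewrite /cart_Kn; case/orP=> /andP[h1 h2].
- exists q; rewrite (eqP h1); split=> //; move: sq; rewrite /layer_steps /=.
  case hA: (x.2 == (last y p).2); case hB: (y.2 == (last y p).2) => /=.
  + by move: h2; rewrite (eqP hA) (eqP hB) eqxx.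
  + lia.
  + by case: ifP => _; lia.
  + lia.
- exists (y.1 :: q); rewrite /= h1 pq; split=> //; move: sq.
  by rewrite /layer_steps /= (eqP h2); case: (y.2 == _) => /=; [case: ifP => _; lia | lia].
Qed.

Lemma path_within_layer p x : path H x p -> all (fun y => y.2 == x.2) p ->
  path e x.1 (map fst p).
Proof.
elim: p x => //= y p IH x /andP[hxy pp] /andP[/eqP yx ap].
rewrite IH ?yx // andbT.
by move: hxy; rewrite /cart_Kn yx eqxx /= andbF /= => /andP[].
Qed.

Lemma shortest_within_layer u v i p : is_shortest H (u, i) (v, i) p ->
  all (fun y => y.2 == i) p /\ is_shortest e u v (map fst p).
Proof.
case=> /andP[pp /eqP lp] pmin.
have [q [pq lq sq]] := project_walk pp.
have wq : is_walk e u v q by rewrite /is_walk pq lq lp eqxx.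
have := pmin _ (in_layer_walk i wq); rewrite size_map => spq.
have steps0 : layer_steps (u, i) (last (u, i) p) p = 0.
  by apply/eqP; rewrite -leqn0 -(leq_add2l (size q)) addn0 (leq_trans sq).
have layer : all (fun y => y.2 == i) p.
  by move: steps0; rewrite lp /layer_steps /= eqxx /=; case: ifP.
split=> //; split.
  rewrite /is_walk (path_within_layer pp) //=.
  by apply/eqP; rewrite -[u]/((u, i).1) last_map lp.
by move=> q' wq'; have := pmin _ (in_layer_walk i wq'); rewrite !size_map.
Qed.

Lemma layer_tmv X (i : 'I_n) : total_mutual_visibility_set H X ->
  total_mutual_visibility_set e ([set g | (g, i) \in X] :|: S).
Proof.
move=> Xtmv u v; have [p [ps pint]] := Xtmv (u, i) (v, i).
have [layer ps'] := shortest_within_layer ps.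
exists (map fst p); split=> //; rewrite internal_map; apply/allP=> _ /mapP [y yi ->].
have /eqP y2 := allP layer y (mem_take yi).
rewrite /simplicial_set !inE negb_or; apply/andP; split.
  by move/allP: pint => /(_ y yi); case: y y2 {yi} => a b /= ->.
by have := allP (shortest_internal_not_simplicial e_sym ps') y.1;
  rewrite internal_map => /(_ (map_f _ yi)).
Qed.

Definition crossing_free (X : {set T * 'I_n}) : Prop :=
  forall a b i j, a != b -> e a b -> i != j -> (a, j) \in X -> (b, i) \in X -> False.

(* Otherwise (a, i) and (b, j) would be at distance 2 and both of their
   common neighbours (a, j), (b, i) would lie in X. *)
Lemma tmv_crossing_free X : total_mutual_visibility_set H X -> crossing_free X.
Proof.
move=> Xtmv a b i j nab eab nij ajX biX.
have [p [[/andP[pp /eqP lp] pmin] pint]] := Xtmv (a, i) (b, j).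
have : size p <= 2.
  apply: (pmin [:: (a, j); (b, j)]).
  by rewrite /is_walk /= /cart_Kn /= eqxx nij eab !eqxx /= orbT.
case: p pp lp pmin pint => [|y [|z [|w p]]] //=.
- by move=> _ [] /eqP; rewrite (negbTE nab).
- move=> /andP[ayb _] yb; move: ayb.
  by rewrite yb /cart_Kn /= (negbTE nab) (negbTE nij) !andbF.
- move=> /and3P[ay yz _] zb _ /andP[yX _] _; move: ay yz; rewrite zb /cart_Kn /=.
  case: y yX => c k /= yX.
  case/orP=> /andP[/eqP ac ik]; case/orP=> /andP[/eqP cb kj].
  + by move: nab; rewrite ac cb eqxx.
  + by move: yX; rewrite -ac (eqP kj) ajX.
  + by move: yX; rewrite cb -(eqP ik) biX.
  + by move: nij; rewrite (eqP ik) (eqP kj) eqxx.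
Qed.

Lemma walk_size_lb a b i j q p : is_shortest e a b q ->
  is_walk H (a, i) (b, j) p -> size q + (i != j) <= size p.
Proof.
move=> [_ qmin] /andP[pp /eqP lp]; have [q' [pq' lq' sq']] := project_walk pp.
have qq' : size q <= size q' by apply: qmin; rewrite /is_walk pq' lq' lp eqxx.
have steps : (i != j) <= layer_steps (a, i) (last (a, i) p) p.
  by rewrite lp /layer_steps /=; case: (i != j).
exact: leq_trans (leq_add qq' steps) sq'.
Qed.

Lemma visible_by_walk (X : {set T * 'I_n}) a b i j q p : is_shortest e a b q ->
  is_walk H (a, i) (b, j) p -> size p = size q + (i != j) ->
  all (fun y => y \notin X) (internal p) -> X_visible H X (a, i) (b, j).
Proof.
move=> qs wp sp pint; exists p; split=> //; split=> // p' /(walk_size_lb qs).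
by rewrite sp.
Qed.

Section Visibility.
Variable X : {set T * 'I_n}.
Hypothesis X_simplicial : {in X, forall x, x.1 \in S}.
Hypothesis X_crossing_free : crossing_free X.

Lemma in_layer_avoids k s : all (fun x => ~~ simplicial e x) s ->
  all (fun y => y \notin X) (in_layer k s).
Proof.
move=> /allP s_ns; apply/allP=> _ /mapP [x xs ->]; apply/negP.
by move=> /X_simplicial; rewrite inE /= (negbTE (s_ns x xs)).
Qed.

(* Two vertices in different layers above distinct a, b are X-visible: follow a
   shortest a,b-path of G and change layer at an endpoint outside X, or, if
   both (a, j) and (b, i) are in X, at the first internal vertex, which is not
   simplicial (a and b are not adjacent by crossing-freeness). *)
Lemma visible_across_layers a b i j : a != b -> i != j -> connect e a b ->
  X_visible H X (a, i) (b, j).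
Proof.
move=> nab nij /exists_shortest [q qs].
have qint := shortest_internal_not_simplicial e_sym qs.
have [/andP[pq /eqP lq] _] := qs.
have [q0 qE] : exists q0, q = rcons q0 b.
  case: q lq {qs qint pq} => [|x q'] /= lq; first by rewrite lq eqxx in nab.
  by exists (belast x q'); rewrite lastI lq.
move: qint pq; rewrite qE internal_rcons => q0int pq.
have visible p := @visible_by_walk X a b i j q p qs.
rewrite qE size_rcons nij addn1 in visible.
case ajX: ((a, j) \in X); last first.
  apply: (visible ((a, j) :: in_layer j (rcons q0 b))).
  - rewrite /is_walk /= {1}/cart_Kn /= eqxx nij in_layer_path //=.
    by rewrite last_in_layer last_rcons eqxx.
  - by rewrite /= size_map size_rcons.
  - by rewrite /in_layer map_rcons -rcons_cons internal_rcons /= ajX in_layer_avoids.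
case biX: ((b, i) \in X); last first.
  apply: (visible (rcons (in_layer i (rcons q0 b)) (b, j))).
  - rewrite /is_walk rcons_path in_layer_path // last_in_layer last_rcons.
    by rewrite last_rcons eqxx andbT /cart_Kn /= eqxx nij.
  - by rewrite size_rcons size_map size_rcons.
  - by rewrite internal_rcons /in_layer map_rcons all_rcons biX in_layer_avoids.
case: q0 q0int pq visible {qE} => [|c q1] q0int pq visible.
  by move: pq => /= /andP[eab _]; case: (X_crossing_free nab eab nij ajX biX).
move: pq q0int => /= /andP[eac pc] /andP[c_ns q1int].
have cX k : (c, k) \notin X by apply/negP=> /X_simplicial; rewrite inE (negbTE c_ns).
apply: (visible ((c, i) :: (c, j) :: in_layer j (rcons q1 b))).
- rewrite /is_walk /= {1 2}/cart_Kn /= eac !eqxx nij /= in_layer_path //.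
  by rewrite last_in_layer last_rcons !eqxx orbT.
- by rewrite /= size_map !size_rcons.
- by rewrite /in_layer map_rcons -!rcons_cons internal_rcons /= !cX in_layer_avoids.
Qed.

Lemma crossing_free_tmv : connected_graph e -> total_mutual_visibility_set H X.
Proof.
move=> conn [a i] [b j].
have [->|nij] := eqVneq i j.
  have [q qs] := exists_shortest (conn a b).
  apply: (visible_by_walk (q := q) (p := in_layer j q)) => //.
  - by apply: in_layer_walk; case: qs.
  - by rewrite eqxx addn0 size_map.
  - by rewrite internal_map in_layer_avoids // (shortest_internal_not_simplicial e_sym qs).
have [->|nab] := eqVneq a b; last exact: visible_across_layers.
apply: (visible_by_walk (q := [::]) (p := [:: (b, j)])) => //.
- by split=> [|q]; rewrite /is_walk //= eqxx.
- by rewrite /is_walk /= /cart_Kn /= !eqxx nij.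
- by rewrite nij.
Qed.

End Visibility.

End CartesianProduct.

Section ExtremalSets.
Variables (T : finType) (e : rel T) (n : nat).
Hypothesis e_sym : symmetric e.
Local Notation H := (cart_Kn e n).
Local Notation S := (simplicial_set e).

Lemma tmv_above_simplicial (X : {set T * 'I_n}) :
  (forall Y, total_mutual_visibility_set e Y -> #|Y| <= #|S|) ->
  total_mutual_visibility_set H X -> {in X, forall x, x.1 \in S}.
Proof.
move=> S_max Xtmv x xX.
have layerS : S == [set g | (g, x.2) \in X] :|: S.
  by rewrite eqEcard subsetUr (S_max _ (layer_tmv e_sym x.2 Xtmv)).
by rewrite (eqP layerS) !inE -surjective_pairing xX.
Qed.

(* Upper bound: above a twin class C a crossing-free set has all its points
   in one row or one column of C × [n]. *)
Lemma card_crossing_free (X : {set T * 'I_n}) :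
  {in X, forall x, x.1 \in S} -> crossing_free e X ->
  #|X| <= \sum_(C in twin_classes e) maxn #|C| n.
Proof.
move=> XS Xcf; rewrite (card_by_twin_class XS); apply: leq_sum => _ /imsetP [a aS ->].
rewrite -/(twin_class e a) -[in maxn _ n](card_ord n); apply: card_row_or_column.
  by move=> y; rewrite inE => /andP[yX /eqP <-]; exact: twin_class_self (XS _ yX).
move=> [y1 y2] [z1 z2]; rewrite !inE /= => /andP[yX /eqP ya] /andP[zX /eqP za].
have [//|nyz] := eqVneq y1 z1.
have eyz : e y1 z1.
  apply: (twin_class_adj (g := a)) nyz.
    by rewrite -ya twin_class_self // (XS _ yX).
  by rewrite -za twin_class_self // (XS _ zX).
by apply/negPn/negP => n12; apply: (Xcf _ _ _ _ nyz eyz _ yX zX); rewrite eq_sym.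
Qed.

Definition twin_extremal_set (i0 : 'I_n) : {set T * 'I_n} :=
  [set x | (x.1 \in S) &&
    (if n <= #|twin_class e x.1| then x.2 == i0 else x.1 == twin_rep e x.1)].

Variable i0 : 'I_n.
Local Notation X0 := (twin_extremal_set i0).

Lemma twin_extremal_simplicial : {in X0, forall x, x.1 \in S}.
Proof. by move=> x; rewrite inE => /andP[]. Qed.

(* Adjacent simplicial vertices share their twin class, hence their row
   choice in X0. *)
Lemma twin_extremal_crossing_free : crossing_free e X0.
Proof.
move=> a b i j nab eab nij; rewrite !inE /= => /andP[aS ca] /andP[bS cb].
have Cab := twin_class_adj_eq e_sym aS bS eab.
have aS' : a \in S by rewrite inE.
move: ca cb; rewrite Cab (twin_rep_eq aS' Cab); case: ifP => _.
  by move=> /eqP ja /eqP ib; rewrite ja ib eqxx in nij.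
by move=> /eqP ar /eqP br; rewrite ar -br eqxx in nab.
Qed.

Lemma card_twin_extremal : \sum_(C in twin_classes e) maxn #|C| n <= #|X0|.
Proof.
rewrite (card_by_twin_class twin_extremal_simplicial).
apply: leq_sum => _ /imsetP [a aS ->]; rewrite -/(twin_class e a).
case: (leqP n #|twin_class e a|) => large.
  rewrite -(@card_imset _ _ (fun g => (g, i0))); last by move=> x y [].
  apply: subset_leq_card; apply/subsetP=> _ /imsetP [g gC ->].
  have gS := twin_class_simplicial gC.
  by rewrite !inE /= (twin_class_mem gC) large !eqxx !andbT; rewrite inE in gS.
rewrite -{1}(card_ord n) -cardsT.
rewrite -(@card_imset _ _ (fun i => (twin_rep e a, i))); last by move=> x y [].
apply: subset_leq_card; apply/subsetP=> _ /imsetP [i _ ->].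
have rC := twin_rep_in aS; have rS := twin_class_simplicial rC.
rewrite !inE /= (twin_class_mem rC) (twin_rep_eq rS (twin_class_mem rC)).
by rewrite leqNgt large !eqxx !andbT; rewrite inE in rS.
Qed.

End ExtremalSets.

Theorem theorem5p9 (T : finType) (e : rel T)
  (e_sym : symmetric e) (e_irr : irreflexive e)
  (G_conn : connected_graph e)
  (h_mu : mu_t_is e #|simplicial_set e|)
  (n : nat) (hn : 2 <= n) :
  mu_t_is (cart_Kn e n) (\sum_(C in twin_classes e) maxn #|C| n).
Proof.
have upper X : total_mutual_visibility_set (cart_Kn e n) X ->
    #|X| <= \sum_(C in twin_classes e) maxn #|C| n.
  move=> Xtmv; apply: card_crossing_free (tmv_crossing_free Xtmv).
  exact: (tmv_above_simplicial e_sym h_mu.2 Xtmv).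
pose X0 := twin_extremal_set e (Ordinal (ltnW hn)).
have X0tmv : total_mutual_visibility_set (cart_Kn e n) X0.
  apply: (crossing_free_tmv e_sym _ _ G_conn).
    exact: twin_extremal_simplicial.
  exact: twin_extremal_crossing_free.
split=> [|X /upper //]; exists X0; split=> //.
by apply/eqP; rewrite eqn_leq upper // card_twin_extremal.
Qed.
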